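(* Let $p=(p_1,p_2,\dots)$ be a probability distribution on the positive integers with infinite support, and let integers $n \geq 0$ and $k \geq 1$ be given. Throw $n$ balls independently into countably many bins indexed by positive integers, each ball landing in bin $i$ with probability $p_i$, and let $M_n$ be the maximum load of any bin. Let $\|p\|_k = \left(\sum_{i=1}^\infty p_i^k\right)^{1/k}$. Then \[ \Pr[\mathrm{Bin}(n, \|p\|_k) \geq k] \;\leq\; \Pr[M_n \geq k] \;\leq\; \binom{n}{k}\|p\|_k^{k}. \]
   Context: $\mathrm{Bin}(n,\alpha)$ denotes a binomial random variable with $n$ trials and success probability $\alpha$. The load of a bin is the number of balls that landed in it. *)

From HB Require Import structures.
From mathcomp Require Import all_boot all_order all_algebra.
From mathcomp Require Import all_classical all_reals all_analysis.
Set Implicit Arguments. Unset Strict Implicit. Unset Printing Implicit Defensive.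
Import Order.TTheory GRing.Theory Num.Theory.
Import numFieldNormedType.Exports.
Local Open Scope classical_set_scope.
Local Open Scope ring_scope.

(* Bins are indexed by nat (bin i here = bin i+1 of the paper).
   An outcome of throwing n balls is f : {ffun 'I_n -> nat}, f j = bin of ball j. *)

Definition load (n : nat) (f : {ffun 'I_n -> nat}) (b : nat) : nat :=
  #|[set j : 'I_n | f j == b]|.

(* maximum load M_n (0 when n = 0): max over occupied bins *)
Definition maxload (n : nat) (f : {ffun 'I_n -> nat}) : nat :=
  \max_(j : 'I_n) load f (f j).

Definition outcome_mass (R : realType) (p : nat -> R) (n : nat)
  (f : {ffun 'I_n -> nat}) : R := \prod_(j : 'I_n) p (f j).

Definition prob_maxload_ge (R : realType) (p : nat -> R) (n k : nat) : \bar R :=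
  (\esum_(f in [set f : {ffun 'I_n -> nat} | (k <= maxload f)%N])
      (outcome_mass p f)%:E)%E.

Definition pnorm (R : realType) (p : nat -> R) (k : nat) : R :=
  powR (limn (series (fun i => p i ^+ k))) (k%:R^-1).

Definition binom_tail_ge (R : realType) (n : nat) (q : R) (k : nat) : R :=
  \sum_(k <= j < n.+1) ('C(n, j)%:R * q ^+ j * (1 - q) ^+ (n - j)).

From HB Require Import structures.
From mathcomp Require Import all_boot all_order all_algebra.
From mathcomp Require Import all_classical all_reals all_analysis.
From mathcomp Require Import ring lra zify.
Import Order.TTheory GRing.Theory Num.Theory.
Import numFieldNormedType.Exports.
Local Open Scope classical_set_scope.
Local Open Scope ring_scope.

(* Upper bound: [M_n >= k] is covered by the events "all the balls of [T] land
   in bin [b]", for [k]-sets [T] and bins [b], of probability [p_b ^ k].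
   Lower bound: for finitely many bins of weights [w_b], the mass of the throws
   in which every load is below [k] is at most the binomial mass
   Pr[Bin < k] computed with success weight [c = (sum_b w_b ^ k) ^ (1/k)] and
   failure weight [sum_b w_b - c].  Peeling off one bin at a time, this reduces
   to merging two bins of weights [a] and [c] into one bin of weight
   [(a ^ k + c ^ k) ^ (1/k)], which can only increase the chance that no load
   reaches [k].  Truncating [p] to its first bins and letting the truncation
   grow gives the theorem. *)

Lemma mul_bin_sub (n j i : nat) : (j + i <= n)%N ->
  ('C(n, j) * 'C(n - j, i) = 'C(n, j + i) * 'C(j + i, j))%N.
Proof.
move=> h.
have f1 := @bin_fact n j ltac:(lia).
have f2 := @bin_fact (n - j) i ltac:(lia).
have f3 := @bin_fact n (j + i) h.
have f4 := @bin_fact (j + i) j ltac:(lia).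
rewrite addKn in f4; rewrite -subnDA in f2.
apply/eqP; rewrite -(@eqn_pmul2r (j`! * i`! * (n - (j + i))`!)); last first.
  by rewrite !muln_gt0 !fact_gt0.
apply/eqP; transitivity (n`!); first by rewrite -f1 -f2; ring.
by rewrite -f3 -f4; ring.
Qed.

Section NatSums.
Context {R : pzRingType}.

Lemma big_nat_lt_indicator (m K : nat) (f : nat -> R) :
  (forall i, (m < i)%N -> f i = 0) ->
  \sum_(0 <= i < m.+1) (i < K)%:R * f i = \sum_(0 <= i < K) f i.
Proof.
move=> f0; case: (leqP K m.+1) => hK.
  rewrite (big_cat_nat (leq0n K) hK) /= [X in _ + X]big1_seq ?addr0.
    by apply: eq_big_nat => i /andP[_ ->]; rewrite mul1r.
  by move=> i /andP[_]; rewrite mem_index_iota => /andP[h _]; rewrite ltnNge h mul0r.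
rewrite [RHS](big_cat_nat (leq0n m.+1) (ltnW hK)) /= [X in _ = _ + X]big1_seq ?addr0.
  by apply: eq_big_nat => i /andP[_ h]; rewrite (leq_trans h (ltnW hK)) mul1r.
by move=> i /andP[_]; rewrite mem_index_iota => /andP[h _]; apply: f0.
Qed.

Lemma big_nat_geq_indicator (m K : nat) (f : nat -> R) :
  \sum_(K <= i < m.+1) f i = \sum_(0 <= i < m.+1) (K <= i)%:R * f i.
Proof.
rewrite (@big_nat_widenl _ _ _ K 0) // big_mkcond /=.
by apply: eq_big_nat => i _; case: (K <= i)%N; rewrite ?mul1r ?mul0r.
Qed.

Lemma big_bin_regroup n (F : nat -> nat -> R) :
  \sum_(0 <= j < n.+1) \sum_(0 <= i < (n - j).+1) ('C(n, j) * 'C(n - j, i))%N%:R * F j i =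
  \sum_(0 <= m < n.+1) \sum_(0 <= j < m.+1) ('C(n, m) * 'C(m, j))%N%:R * F j (m - j)%N.
Proof.
have -> : \sum_(0 <= m < n.+1) \sum_(0 <= j < m.+1) ('C(n, m) * 'C(m, j))%N%:R * F j (m - j)%N
  = \sum_(0 <= m < n.+1) \sum_(0 <= j < n.+1) ('C(n, m) * 'C(m, j))%N%:R * F j (m - j)%N.
  apply: eq_big_nat => m /andP[_ hm].
  rewrite [RHS](big_cat_nat (leq0n m.+1) hm) /= [X in _ = _ + X]big1_seq ?addr0 //.
  move=> j /andP[_]; rewrite mem_index_iota => /andP[hj _].
  by rewrite (bin_small hj) muln0 mul0r.
rewrite exchange_big_nat /=; apply: eq_big_nat => j /andP[_ hj].
rewrite [RHS](big_cat_nat (leq0n j) (ltnW hj)) /= [X in _ = X + _]big1_seq ?add0r; last first.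
  move=> m /andP[_]; rewrite mem_index_iota => /andP[_ hm].
  by rewrite (bin_small hm) muln0 mul0r.
have := big_addn 0 n.+1 j xpredT (fun m => ('C(n, m) * 'C(m, j))%N%:R * F j (m - j)%N).
rewrite add0n => ->; rewrite (subSn (ltnSE hj)); apply: eq_big_nat => i /andP[_ hi].
by rewrite addnK addnC mul_bin_sub //; lia.
Qed.

End NatSums.

Section BinomialSplit.
Context {R : comPzRingType} (k : nat).

(* With [a + b = 1], [binom_head m a b] and [binom_tail m a b] are
   Pr[Bin(m, a) < k] and Pr[Bin(m, a) >= k]; [binom_head2 m a c] is the mass
   of the throws of [m] balls into two bins of weights [a] and [c] that leave
   both loads below [k]. *)
Definition binom_head m (a b : R) : R :=
  \sum_(0 <= j < k) 'C(m, j)%:R * a ^+ j * b ^+ (m - j).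
Definition binom_tail m (a b : R) : R :=
  \sum_(k <= j < m.+1) 'C(m, j)%:R * a ^+ j * b ^+ (m - j).

Lemma exprDn_binom m (a b : R) :
  (a + b) ^+ m = \sum_(0 <= j < m.+1) 'C(m, j)%:R * a ^+ j * b ^+ (m - j).
Proof.
rewrite addrC exprDn big_mkord; apply: eq_bigr => i _.
by rewrite -mulr_natl; ring.
Qed.

Lemma binom_headDtail m a b : binom_head m a b + binom_tail m a b = (a + b) ^+ m.
Proof.
rewrite exprDn_binom /binom_head /binom_tail; case: (leqP k m.+1) => hk.
  by rewrite -big_cat_nat.
rewrite (@big_geq _ _ _ k m.+1) ?(ltnW hk) // addr0.
rewrite (big_cat_nat (leq0n m.+1) (ltnW hk)) /= [X in _ + X]big1_seq ?addr0 //.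
by move=> i /andP[_]; rewrite mem_index_iota => /andP[h _]; rewrite bin_small // !mul0r.
Qed.

Definition binom_head2 m (a c : R) : R := \sum_(0 <= j < m.+1)
  ((j < k) && (m - j < k))%N%:R * ('C(m, j)%:R * a ^+ j * c ^+ (m - j)).

Lemma binom_head2_complement m a c : (m.+1 < k + k)%N ->
  binom_head2 m a c + binom_tail m a c + binom_tail m c a = (a + c) ^+ m.
Proof.
move=> hm.
have tail_rev : binom_tail m c a = \sum_(0 <= j < m.+1)
    (k <= m - j)%N%:R * ('C(m, j)%:R * a ^+ j * c ^+ (m - j)).
  rewrite /binom_tail big_nat_geq_indicator big_nat_rev /=.
  apply: eq_big_nat => j /andP[_ hj]; rewrite add0n subSS (bin_sub (ltnSE hj)).
  by rewrite (subKn (ltnSE hj)); ring.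
rewrite tail_rev /binom_tail big_nat_geq_indicator exprDn_binom /binom_head2 -!big_split /=.
apply: eq_big_nat => j /andP[_ hj]; rewrite -!mulrDl.
suff -> : ((j < k) && (m - j < k))%N%:R + (k <= j)%N%:R + (k <= m - j)%N%:R = 1 :> R.
  by rewrite mul1r.
rewrite (leqNgt k j) (leqNgt k (m - j)).
case h1: (j < k)%N; case h2: (m - j < k)%N; rewrite /= ?(add0r, addr0) //.
by exfalso; move/negbT: h1; move/negbT: h2; rewrite -!ltnNge; lia.
Qed.

Hypothesis k_gt0 : (0 < k)%N.

Lemma binom_headS m a b : binom_head m.+1 a b =
  (a + b) * binom_head m a b - 'C(m, k.-1)%:R * a ^+ k * b ^+ (m.+1 - k).
Proof.
have [k' hk] : exists k', k = k'.+1 by exists k.-1; rewrite prednK.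
have Eb : b * binom_head m a b = b ^+ m.+1 + \sum_(0 <= i < k')
    'C(m, i.+1)%:R * a ^+ i.+1 * b ^+ (m.+1 - i.+1).
  rewrite /binom_head hk big_nat_recl // mulrDr bin0 subn0 expr0 !mul1r exprS.
  congr (_ + _); rewrite mulr_sumr; apply: eq_big_nat => i _ /=.
  case: (leqP i.+1 m) => h; first by rewrite (subSn h) [b ^+ (_.+1)]exprS; ring.
  by rewrite bin_small // !mul0r mulr0.
have Ea : a * binom_head m a b = \sum_(0 <= i < k')
    'C(m, i)%:R * a ^+ i.+1 * b ^+ (m.+1 - i.+1) + 'C(m, k.-1)%:R * a ^+ k * b ^+ (m.+1 - k).
  rewrite /binom_head hk big_nat_recr //= mulrDr mulr_sumr subSS exprS.
  congr (_ + _); last by ring.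
  by apply: eq_big_nat => i _ /=; rewrite subSS exprS; ring.
rewrite {1}/binom_head hk big_nat_recl //.
under eq_bigr do rewrite binS natrD mulrDl mulrDl.
rewrite big_split /= bin0 subn0 expr0 !mul1r mulrDl Eb Ea hk /=; ring.
Qed.

Lemma binom_tailS m a b : binom_tail m.+1 a b =
  (a + b) * binom_tail m a b + 'C(m, k.-1)%:R * a ^+ k * b ^+ (m.+1 - k).
Proof.
have := binom_headDtail m.+1 a b.
rewrite binom_headS exprS -(binom_headDtail m a b) => h.
apply: (addrI ((a + b) * binom_head m a b - 'C(m, k.-1)%:R * a ^+ k * b ^+ (m.+1 - k))).
by rewrite h; ring.
Qed.

Lemma binom_head0 (a b : R) : binom_head 0 a b = 1.
Proof.
rewrite /binom_head; case: k k_gt0 => // k' _.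
rewrite big_nat_recl // big1 => [|j _]; first by rewrite bin0 !expr0 !mulr1 addr0.
by rewrite bin0n mul0r mul0r.
Qed.

(* Classifying the outcomes of [binom_tail] by the trial [m'.+1] of the [k]-th
   success gives [binom_tail m a b = a ^+ k * tail_cofactor m b (a + b)]. *)
Fixpoint tail_cofactor (m : nat) (b s : R) : R :=
  if m is m'.+1 then s * tail_cofactor m' b s + 'C(m', k.-1)%:R * b ^+ (m'.+1 - k)
  else 0.

Lemma binom_tail_cofactor m a b : binom_tail m a b = a ^+ k * tail_cofactor m b (a + b).
Proof.
elim: m => [|m IH]; first by rewrite /binom_tail big_geq // mulr0.
by rewrite binom_tailS IH /=; ring.
Qed.

End BinomialSplit.

Section BinomialInequalities.
Context {R : realDomainType} (k : nat).
Hypothesis k_gt0 : (0 < k)%N.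

Lemma exprDn_ge (x y : R) : 0 <= x -> 0 <= y -> x ^+ k + y ^+ k <= (x + y) ^+ k.
Proof.
move=> x0 y0; case: k k_gt0 => // n _; rewrite !exprSr mulrDr.
have xy0 : 0 <= x + y := addr_ge0 x0 y0.
by apply: lerD; apply: ler_wpM2r => //; apply: lerXn2r; rewrite ?nnegrE ?lerDl ?lerDr.
Qed.

Lemma sum_exprn_le (I : Type) (r : seq I) (P : pred I) (F : I -> R) :
  (forall i, P i -> 0 <= F i) ->
  \sum_(i <- r | P i) F i ^+ k <= (\sum_(i <- r | P i) F i) ^+ k.
Proof.
move=> F0.
suff [] : 0 <= \sum_(i <- r | P i) F i /\
          \sum_(i <- r | P i) F i ^+ k <= (\sum_(i <- r | P i) F i) ^+ k by [].
apply: (big_ind2 (fun x y => 0 <= y /\ x <= y ^+ k)) => [|x1 x2 y1 y2 [x20 h1] [y20 h2]|i Pi].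
- by rewrite expr0n gtn_eqF.
- by split; [exact: addr_ge0|exact: le_trans (lerD h1 h2) (exprDn_ge _ _ x20 y20)].
- by split; [exact: F0|].
Qed.

Lemma binom_head_ge0 m (a b : R) : 0 <= a -> 0 <= b -> 0 <= binom_head k m a b.
Proof.
move=> a0 b0; apply: sumr_ge0 => i _.
by rewrite !mulr_ge0 ?exprn_ge0.
Qed.

Lemma le_tail_cofactor m (b b' s : R) : 0 <= b -> b <= b' -> 0 <= s ->
  tail_cofactor k m b s <= tail_cofactor k m b' s.
Proof.
move=> b0 bb' s0; elim: m => [|m IH] //=.
apply: lerD; first exact: ler_wpM2l.
by apply: ler_wpM2l => //; apply: lerXn2r; rewrite ?nnegrE // (le_trans b0 bb').
Qed.

(* For [m.+1 < 2k] this follows from the cofactor form of the tails, as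
   [a + c - c'] is at most [a] and at most [c]; for larger [m] the left side
   vanishes. *)
Lemma binom_head2_le m (a c c' : R) : 0 <= a -> 0 <= c -> 0 <= c' ->
  c' ^+ k = a ^+ k + c ^+ k ->
  binom_head2 k m a c <= binom_head k m c' (a + c - c').
Proof.
move=> a0 c0 c'0 hc'.
have le_root (x y : R) : 0 <= x -> 0 <= y -> x ^+ k <= y ^+ k -> x <= y.
  by move=> x0 y0; rewrite ler_pXn2r.
have c'_le : c' <= a + c by rewrite le_root ?addr_ge0 // hc' exprDn_ge.
have a_le : a <= c' by rewrite le_root // hc' lerDl exprn_ge0.
have c_le : c <= c' by rewrite le_root // hc' lerDr exprn_ge0.
set x := a + c - c'.
have x0 : 0 <= x by rewrite subr_ge0.
have [xa xc] : x <= a /\ x <= c by rewrite /x; split; lra.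
have s0 : 0 <= a + c := addr_ge0 a0 c0.
case: (ltnP m.+1 (k + k)) => hm; last first.
  rewrite /binom_head2 big1_seq ?binom_head_ge0 // => j /andP[_].
  rewrite mem_index_iota => /andP[_ hj].
  by case h1: (j < k)%N; case h2: (m - j < k)%N; rewrite /= ?mul0r //; lia.
have tail_le : binom_tail k m c' x <= binom_tail k m a c + binom_tail k m c a.
  rewrite !binom_tail_cofactor // [c + a]addrC.
  have -> : c' + x = a + c by rewrite /x; ring.
  rewrite hc' mulrDl.
  by apply: lerD; apply: ler_wpM2l; rewrite ?exprn_ge0 ?le_tail_cofactor.
have := binom_head2_complement k m a c hm; have := binom_headDtail k m c' x.
have -> : c' + x = a + c by rewrite /x; ring.
by lra.
Qed.

Lemma binom_head2_conv n (a c e : R) :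
  \sum_(0 <= j < k) 'C(n, j)%:R * a ^+ j * binom_head k (n - j) c e =
  \sum_(0 <= m < n.+1) 'C(n, m)%:R * e ^+ (n - m) * binom_head2 k m a c.
Proof.
rewrite -(@big_nat_lt_indicator _ n k); last by move=> i hi; rewrite bin_small // !mul0r.
transitivity (\sum_(0 <= j < n.+1) \sum_(0 <= i < (n - j).+1)
   ('C(n, j) * 'C(n - j, i))%N%:R *
   (((j < k)%N && (i < k)%N)%:R * (a ^+ j * c ^+ i * e ^+ (n - j - i)))).
  apply: eq_big_nat => j _.
  rewrite /binom_head -(@big_nat_lt_indicator _ (n - j) k); last first.
    by move=> i hi; rewrite bin_small // !mul0r.
  rewrite mulrA mulr_sumr; apply: eq_big_nat => i _ /=.
  by rewrite natrM -mulnb natrM; ring.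
rewrite big_bin_regroup; apply: eq_big_nat => m /andP[_ hm].
rewrite /binom_head2 mulr_sumr; apply: eq_big_nat => j /andP[_ hj] /=.
have -> : (n - j - (m - j) = n - m)%N by lia.
by rewrite natrM; ring.
Qed.

Lemma binom_head_conv n (c x e : R) :
  binom_head k n c (x + e) =
  \sum_(0 <= m < n.+1) 'C(n, m)%:R * e ^+ (n - m) * binom_head k m c x.
Proof.
rewrite /binom_head -(@big_nat_lt_indicator _ n k); last first.
  by move=> i hi; rewrite bin_small // !mul0r.
transitivity (\sum_(0 <= i < n.+1) \sum_(0 <= l < (n - i).+1)
   ('C(n, i) * 'C(n - i, l))%N%:R *
   ((i < k)%N%:R * (c ^+ i * x ^+ l * e ^+ (n - i - l)))).
  apply: eq_big_nat => i _.
  rewrite exprDn_binom mulrA mulr_sumr; apply: eq_big_nat => l _ /=.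
  by rewrite natrM; ring.
rewrite big_bin_regroup; apply: eq_big_nat => m /andP[_ hm].
rewrite -(@big_nat_lt_indicator _ m k); last by move=> i hi; rewrite bin_small // !mul0r.
rewrite mulr_sumr; apply: eq_big_nat => j /andP[_ hj] /=.
have -> : (n - j - (m - j) = n - m)%N by lia.
by rewrite natrM; ring.
Qed.

(* The left side is the mass of the throws of [n] balls into two bins of
   weights [a] and [c] and a remainder of weight [e] that leave both bins
   with fewer than [k] balls. *)
Lemma binom_head_merge n (a c e c' : R) : 0 <= a -> 0 <= c -> 0 <= e -> 0 <= c' ->
  c' ^+ k = a ^+ k + c ^+ k ->
  \sum_(0 <= j < k) 'C(n, j)%:R * a ^+ j * binom_head k (n - j) c e
    <= binom_head k n c' (a + c - c' + e).
Proof.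
move=> a0 c0 e0 c'0 hc'.
rewrite binom_head2_conv binom_head_conv; apply: ler_sum_nat => m _.
by apply: ler_wpM2l; rewrite ?mulr_ge0 ?exprn_ge0 ?binom_head2_le.
Qed.

End BinomialInequalities.

Lemma sum_subsets_card_lt {R : pzSemiRingType} (T : finType) (A : {set T}) (K : nat)
    (G : nat -> R) :
  \sum_(S : {set T} | (S \subset A) && (#|S| < K)%N) G #|S| =
  \sum_(0 <= j < K) 'C(#|A|, j)%:R * G j.
Proof.
transitivity (\sum_(S : {set T} | S \subset A) \sum_(0 <= j < K | j == #|S|) G j).
  by rewrite big_mkcondr /=; apply: eq_bigr => S _; rewrite big_nat1_eq leq0n.
rewrite (exchange_big_dep xpredT) //=; apply: eq_big_nat => j _.
rewrite sumr_const -cards_draws mulr_natl.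
by congr (_ *+ _); apply: eq_card => S; rewrite !inE eq_sym.
Qed.

Lemma powR_invnK {R : realType} (n : nat) (x : R) : (0 < n)%N -> 0 <= x ->
  (x `^ n%:R^-1) ^+ n = x.
Proof.
move=> n_gt0 x0; rewrite -powR_mulrn ?powR_ge0 // -powRrM mulVf ?powRr1 //.
by rewrite pnatr_eq0 -lt0n.
Qed.

Section FiniteBins.
Context {R : realType} (k : nat) {I B : finType} (b0 : B) (w : B -> R).
Hypothesis k_gt0 : (0 < k)%N.
Hypothesis w_ge0 : forall b, 0 <= w b.

(* The balls outside [A] are parked in the bin [b0], so that the placements
   of the balls of [A] into the bins of [Bs] are total functions on [I]. *)
Definition confined (A : {set I}) (Bs : {set B}) (g : {ffun I -> B}) : bool :=
  [forall j, if j \in A then g j \in Bs else g j == b0].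

Definition loads_lt (A : {set I}) (Bs : {set B}) (g : {ffun I -> B}) : bool :=
  [forall b in Bs, #|[set j in A | g j == b]| < k]%N.

Definition mass_loads_lt (A : {set I}) (Bs : {set B}) : R :=
  \sum_(g | confined A Bs g) (\prod_(j in A) w (g j)) * (loads_lt A Bs g)%:R.

Definition redirect (T : {set I}) (v : B) (g : {ffun I -> B}) : {ffun I -> B} :=
  [ffun j => if j \in T then v else g j].

Lemma confined_redirectE (A T : {set I}) (Bs : {set B}) b g :
  b \notin Bs -> T \subset A ->
  confined A (b |: Bs) (redirect T b g) && ([set j in A | redirect T b g j == b] == T)
    && (redirect T b0 (redirect T b g) == g) = confined (A :\: T) Bs g.
Proof.
move=> bBs TA; apply/idP/idP => [/andP[/andP[hv /eqP hT] /eqP hg]|hv].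
  have gT j : j \in T -> g j = b0 by move=> jT; rewrite -hg !ffunE jT.
  apply/forallP => j; rewrite inE.
  case: (boolP (j \in T)) => jT /=; first by rewrite gT // eqxx.
  have := forallP hv j; rewrite !ffunE (negbTE jT).
  case: ifP => jA //; rewrite in_setU1 => /orP[/eqP gb|//].
  by move/setP: hT => /(_ j); rewrite !inE jA (negbTE jT) !ffunE (negbTE jT) gb eqxx.
have not_b j : j \notin T -> j \in A -> g j != b.
  move=> jT jA; have := forallP hv j; rewrite inE jT jA /=.
  by apply: contraTneq => ->.
apply/andP; split; first (apply/andP; split).
- apply/forallP => j; rewrite !ffunE; have := forallP hv j; rewrite inE.
  case: (boolP (j \in T)) => jT /=; first by rewrite (fintype.subsetP TA j jT) setU11.
  by case: ifP => // jA hg; rewrite in_setU1 hg orbT.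
- apply/eqP/setP => j; rewrite !inE !ffunE.
  case: (boolP (j \in T)) => jT /=; first by rewrite (fintype.subsetP TA j jT) eqxx.
  by case: (boolP (j \in A)) => jA //=; apply/negbTE/not_b.
- apply/eqP/ffunP => j; rewrite !ffunE; have := forallP hv j; rewrite inE.
  by case: (boolP (j \in T)) => jT //= /eqP.
Qed.

Lemma loads_lt_redirect (A T : {set I}) (Bs : {set B}) b g :
  b \notin Bs -> T \subset A -> (#|T| < k)%N -> confined (A :\: T) Bs g ->
  loads_lt A (b |: Bs) (redirect T b g) = loads_lt (A :\: T) Bs g.
Proof.
move=> bBs TA Tk hv.
have load_other b' : b' \in Bs ->
    [set j in A | redirect T b g j == b'] = [set j in A :\: T | g j == b'].
  move=> hb'; have hbb : b != b' by apply: contraNneq bBs => ->.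
  apply/setP => j; rewrite !inE ffunE.
  by case: (boolP (j \in T)) => jT //=; rewrite (negbTE hbb) andbF.
have load_b : [set j in A | redirect T b g j == b] = T.
  apply/setP => j; rewrite inE ffunE; case: (boolP (j \in T)) => jT.
    by rewrite eqxx andbT (fintype.subsetP TA).
  have := forallP hv j; rewrite inE jT /=; case: (boolP (j \in A)) => jA //= hg.
  by apply/negbTE; apply: contra bBs => /eqP <-.
apply/forall_inP/forall_inP => h b'.
  by move=> hb'; have := h b' (setU1r b hb'); rewrite load_other.
by rewrite in_setU1 => /orP[/eqP -> | hb']; rewrite ?load_b // load_other // h.
Qed.

Lemma mass_loads_lt_fiber (A T : {set I}) (Bs : {set B}) b :
  b \notin Bs -> T \subset A -> (#|T| < k)%N ->
  \sum_(g | confined A (b |: Bs) g && ([set j in A | g j == b] == T))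
     (\prod_(j in A) w (g j)) * (loads_lt A (b |: Bs) g)%:R =
  w b ^+ #|T| * mass_loads_lt (A :\: T) Bs.
Proof.
move=> bBs TA Tk; rewrite /mass_loads_lt mulr_sumr.
rewrite (reindex_onto (redirect T b) (redirect T b0)); last first.
  move=> g /andP[_ /eqP hT]; apply/ffunP => j; rewrite !ffunE.
  case: ifP => jT; last by rewrite jT.
  by move: jT; rewrite -hT inE => /andP[_ /eqP ->].
apply: eq_big => [g|g]; first exact: confined_redirectE.
rewrite confined_redirectE // => hv.
rewrite (big_setID T) /= (finset.setIidPr TA).
have -> : \prod_(j in T) w (redirect T b g j) = w b ^+ #|T|.
  by rewrite (eq_bigr (fun=> w b)) ?prodr_const // => j jT; rewrite ffunE jT.
have -> : \prod_(j in A :\: T) w (redirect T b g j) = \prod_(j in A :\: T) w (g j).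
  by apply: eq_bigr => j; rewrite inE => /andP[/negbTE jT _]; rewrite ffunE jT.
by rewrite loads_lt_redirect // mulrA.
Qed.

Lemma mass_loads_ltU1 (A : {set I}) (Bs : {set B}) b : b \notin Bs ->
  mass_loads_lt A (b |: Bs) = \sum_(T : {set I} | (T \subset A) && (#|T| < k)%N)
     w b ^+ #|T| * mass_loads_lt (A :\: T) Bs.
Proof.
move=> bBs; rewrite {1}/mass_loads_lt.
rewrite (partition_big (fun g : {ffun I -> B} => [set j in A | g j == b]) xpredT) //=.
rewrite [RHS]big_mkcond /=; apply: eq_bigr => T _.
case: ifPn => [/andP[TA Tk]|hT]; first exact: mass_loads_lt_fiber.
apply: big1 => g /andP[hv /eqP hg].
have TA : T \subset A by rewrite -hg; apply/fintype.subsetP => j; rewrite inE => /andP[].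
suff -> : loads_lt A (b |: Bs) g = false by rewrite mulr0.
apply/negbTE/forall_inP => /(_ b (setU11 b Bs)); rewrite hg.
by move: hT; rewrite TA /= => /negbTE ->.
Qed.

Lemma mass_loads_lt0 (A : {set I}) : mass_loads_lt A finset.set0 = (#|A| == 0)%N%:R.
Proof.
have [-> | [j jA]] := set_0Vmem A.
  rewrite cards0 /mass_loads_lt (big_pred1 [ffun=> b0]); last first.
    move=> g /=; apply/forallP/eqP => [h|-> j]; last by rewrite finset.in_set0 ffunE eqxx.
    by apply/ffunP => j; rewrite ffunE; have := h j; rewrite finset.in_set0 => /eqP.
  suff -> : loads_lt finset.set0 finset.set0 [ffun=> b0] by rewrite big_set0 mul1r.
  by apply/forallP => b; rewrite finset.in_set0.
have A_neq0 : #|A| != 0%N by rewrite -lt0n card_gt0; apply/set0Pn; exists j.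
rewrite /mass_loads_lt big_pred0 ?(negbTE A_neq0) // => g.
by apply/negbTE/forallP => /(_ j); rewrite jA finset.in_set0.
Qed.

Definition mass_loads_lt_bounded (Bs : {set B}) : Prop := forall (A : {set I}) (c : R),
  0 <= c -> c ^+ k = \sum_(b in Bs) w b ^+ k ->
  mass_loads_lt A Bs <= binom_head k #|A| c (\sum_(b in Bs) w b - c).

Lemma mass_loads_lt_bounded0 : mass_loads_lt_bounded finset.set0.
Proof.
move=> A c c0; rewrite !big_set0 => /eqP; rewrite expf_eq0 k_gt0 /= => /eqP ->.
rewrite subrr mass_loads_lt0; case: eqP => [->|_]; first by rewrite binom_head0.
exact: binom_head_ge0.
Qed.

Lemma mass_loads_lt_boundedU1 (Bs : {set B}) b : b \notin Bs ->
  mass_loads_lt_bounded Bs -> mass_loads_lt_bounded (b |: Bs).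
Proof.
move=> bBs IH A c c0; rewrite !big_setU1 //= => hc.
set s := \sum_(i in Bs) w i; set q := \sum_(i in Bs) w i ^+ k.
have q_ge0 : 0 <= q by apply: sumr_ge0 => i _; apply: exprn_ge0.
set c1 := q `^ k%:R^-1.
have c1_ge0 : 0 <= c1 := powR_ge0 _ _.
have hc1 : c1 ^+ k = q := powR_invnK _ _ k_gt0 q_ge0.
have c1_le : c1 <= s.
  by rewrite -(ler_pXn2r k_gt0) ?nnegrE ?sumr_ge0 // hc1 sum_exprn_le.
rewrite mass_loads_ltU1 //.
apply: le_trans (_ : \sum_(T : {set I} | (T \subset A) && (#|T| < k)%N)
    w b ^+ #|T| * binom_head k #|A :\: T| c1 (s - c1) <= _).
  by apply: ler_sum => T _; apply: ler_wpM2l; [exact: exprn_ge0 | exact: IH].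
under eq_bigr => T /andP[TA _] do rewrite cardsD (finset.setIidPr TA).
rewrite (sum_subsets_card_lt _ A k (fun j => w b ^+ j * binom_head k (#|A| - j) c1 (s - c1))).
under eq_big_nat => j _ do rewrite mulrA.
have -> : w b + s - c = w b + c1 - c + (s - c1) by ring.
by apply: binom_head_merge; rewrite ?subr_ge0 // hc hc1.
Qed.

Lemma mass_loads_lt_le (Bs : {set B}) : mass_loads_lt_bounded Bs.
Proof.
elim: {Bs}_.+1 {-2}Bs (ltnSn #|Bs|) => // nb IH Bs hBs.
have [-> | [b bBs]] := set_0Vmem Bs; first exact: mass_loads_lt_bounded0.
rewrite -(finset.setD1K bBs); apply: mass_loads_lt_boundedU1; first by rewrite !inE eqxx.
by apply: IH; move: hBs; rewrite (cardsD1 b Bs) bBs.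
Qed.

End FiniteBins.

Section TruncatedBins.
Context {R : realType} (p : nat -> R) (n k N : nat).
Hypothesis k_gt0 : (0 < k)%N.
Hypothesis p_ge0 : forall i, 0 <= p i.

Definition widen_outcome (g : {ffun 'I_n -> 'I_N.+1}) : {ffun 'I_n -> nat} :=
  [ffun j => val (g j)].

Definition ptrunc (b : 'I_N.+1) : R := p b.

Definition trunc_pnorm : R := series (fun i => p i ^+ k) N.+1 `^ k%:R^-1.

Lemma ptrunc_ge0 b : 0 <= ptrunc b. Proof. exact: p_ge0. Qed.

Lemma widen_outcome_inj : injective widen_outcome.
Proof.
move=> g1 g2 /ffunP h; apply/ffunP => j; apply: val_inj.
by have := h j; rewrite !ffunE.
Qed.

Lemma outcome_mass_widen g : outcome_mass p (widen_outcome g) = \prod_j ptrunc (g j).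
Proof. by apply: eq_bigr => j _; rewrite ffunE. Qed.

Lemma load_widen g (b : 'I_N.+1) : load (widen_outcome g) b = #|[set j | g j == b]%SET|.
Proof.
apply: eq_card => j; rewrite inE unfold_in /in_set /= asboolb ffunE.
exact: (inj_eq val_inj).
Qed.

Lemma maxload_widen_lt g :
  (maxload (widen_outcome g) < k)%N = loads_lt k finset.setT finset.setT g.
Proof.
have load_g b : #|[set j in finset.setT | g j == b]| = #|[set j | g j == b]%SET|.
  by apply: eq_card => j; rewrite !inE.
rewrite /maxload -(prednK k_gt0) ltnS.
apply/bigmax_leqP/forall_inP => h b.
  move=> _; rewrite ltnS load_g.
  case: (pickP (fun j => g j == b)) => [j /eqP <- | none].
    by have := h j isT; rewrite ffunE load_widen.
  suff -> : [set j | g j == b]%SET = finset.set0 by rewrite cards0.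
  by apply/setP => j; rewrite !inE none.
by move=> _; rewrite ffunE load_widen -load_g -ltnS; apply: h; rewrite finset.in_setT.
Qed.

Lemma sum_ptrunc : \sum_(b : 'I_N.+1) ptrunc b = series p N.+1.
Proof. by rewrite /series /= -(big_mkord xpredT). Qed.

Lemma sum_ptrunc_exprn : \sum_(b : 'I_N.+1) ptrunc b ^+ k = series (fun i => p i ^+ k) N.+1.
Proof. by rewrite /series /= -(big_mkord xpredT (fun i => p i ^+ k)). Qed.

Lemma sum_outcome_mass :
  \sum_(g : {ffun 'I_n -> 'I_N.+1}) \prod_j ptrunc (g j) = series p N.+1 ^+ n.
Proof.
rewrite -(bigA_distr_bigA (fun (j : 'I_n) (b : 'I_N.+1) => ptrunc b)) /=.
by rewrite prodr_const card_ord sum_ptrunc.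
Qed.

Definition trunc_prob_maxload_ge : R := \sum_(g : {ffun 'I_n -> 'I_N.+1})
  \prod_j ptrunc (g j) * (k <= maxload (widen_outcome g))%N%:R.

Lemma trunc_prob_maxload_geE :
  trunc_prob_maxload_ge =
    series p N.+1 ^+ n - mass_loads_lt k ord0 ptrunc (finset.setT : {set 'I_n}) finset.setT.
Proof.
have confined_all g : confined ord0 (finset.setT : {set 'I_n}) finset.setT g.
  by apply/forallP => j; rewrite !finset.in_setT.
rewrite /trunc_prob_maxload_ge -sum_outcome_mass /mass_loads_lt.
rewrite [X in _ = _ - X](eq_bigl xpredT); last exact: confined_all.
rewrite -sumrB; apply: eq_bigr => g _.
have -> : \prod_(j in finset.setT) ptrunc (g j) = \prod_j ptrunc (g j).
  by apply: eq_bigl => j; rewrite finset.in_setT.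
rewrite -maxload_widen_lt (leqNgt k).
by case: (maxload (widen_outcome g) < k)%N; rewrite /= ?mulr0 ?mulr1 ?subrr ?subr0.
Qed.

Lemma binom_tail_le_trunc_prob :
  binom_tail k n trunc_pnorm (series p N.+1 - trunc_pnorm) <= trunc_prob_maxload_ge.
Proof.
set c := trunc_pnorm; have c_ge0 : 0 <= c by rewrite powR_ge0.
have hc : c ^+ k = \sum_(b in finset.setT) ptrunc b ^+ k.
  rewrite /c /trunc_pnorm powR_invnK ?sumr_ge0 // => [|i _]; last exact: exprn_ge0.
  by rewrite -sum_ptrunc_exprn; apply: eq_bigl => b; rewrite finset.in_setT.
have := mass_loads_lt_le k ord0 ptrunc k_gt0 ptrunc_ge0 finset.setT
  (finset.setT : {set 'I_n}) c c_ge0 hc.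
have -> : \sum_(b in finset.setT) ptrunc b = series p N.+1.
  by rewrite -sum_ptrunc; apply: eq_bigl => b; rewrite finset.in_setT.
rewrite cardsT card_ord trunc_prob_maxload_geE => mass_le.
have := binom_headDtail k n c (series p N.+1 - c).
rewrite [c + _]addrC subrK => <-.
by rewrite [binom_head _ _ _ _ + _]addrC -addrA lerDl subr_ge0.
Qed.

Lemma sum_outcome_mass_subset (T : {set 'I_n}) (b : 'I_N.+1) :
  \sum_(g : {ffun 'I_n -> 'I_N.+1})
     \prod_j ptrunc (g j) * (T \subset [set j | g j == b]%SET)%:R
  = ptrunc b ^+ #|T| * series p N.+1 ^+ (n - #|T|).
Proof.
have factor g : \prod_j ptrunc (g j) * (T \subset [set j | g j == b]%SET)%:R
    = \prod_j (ptrunc (g j) * ((j \in T) ==> (g j == b))%:R).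
  rewrite big_split /=; congr (_ * _).
  case: (boolP (T \subset _)) => [/fintype.subsetP h | /subsetPn[j jT]].
    by rewrite big1 // => j _; case: (boolP (j \in T)) => //= /h; rewrite inE => ->.
  by rewrite inE => gj; rewrite (bigD1 j) //= jT /= (negbTE gj) mul0r.
under eq_bigr do rewrite factor.
rewrite -(bigA_distr_bigA (fun j (b' : 'I_N.+1) => ptrunc b' * ((j \in T) ==> (b' == b))%:R)).
rewrite /= (bigID (mem T)) /=.
rewrite (eq_bigr (fun=> ptrunc b)) => [|j jT]; last first.
  rewrite jT /= (bigD1 b) //= eqxx mulr1 big1 ?addr0 // => b' /negbTE ->.
  by rewrite mulr0.
rewrite [X in _ * X](eq_bigr (fun=> series p N.+1)) => [|j /negbTE jT]; last first.
  by rewrite jT -sum_ptrunc; apply: eq_bigr => b' _; rewrite mulr1.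
rewrite !prodr_const; congr (_ * _ ^+ _).
have := cardC T; rewrite card_ord => hT.
have T_le : (#|T| <= n)%N by rewrite -[X in (_ <= X)%N](card_ord n) max_card.
by apply/eqP; rewrite -(eqn_add2l #|T|) subnKC // hT.
Qed.

Lemma maxload_ge_le_subsets g : (k <= maxload (widen_outcome g))%N%:R <=
  \sum_(T : {set 'I_n} | #|T| == k) \sum_(b : 'I_N.+1)
     (T \subset [set j | g j == b]%SET)%:R :> R.
Proof.
case h: (k <= maxload _)%N; last by rewrite sumr_ge0 // => T _; rewrite sumr_ge0.
have : ~~ loads_lt k (finset.setT : {set 'I_n}) finset.setT g.
  by rewrite -maxload_widen_lt -leqNgt h.
move=> /forall_inPn[b _]; rewrite -leqNgt => hb.
set D := [set j | g j == b]%SET.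
have hD : (k <= #|D|)%N by move: hb; congr (k <= _)%N; apply: eq_card => j; rewrite !inE.
apply: (@le_trans _ _ (\sum_(T : {set 'I_n} | #|T| == k) (T \subset D)%:R)).
  have -> : \sum_(T : {set 'I_n} | #|T| == k) (T \subset D)%:R = 'C(#|D|, k)%:R :> R.
    rewrite -cards_draws -sum1_card natr_sum [RHS]big_mkcond [LHS]big_mkcond /=.
    by apply: eq_bigr => T _; rewrite inE; case: (T \subset D); case: (#|T| == k).
  by rewrite ler1n bin_gt0.
apply: ler_sum => T _; rewrite (bigD1 b) //= lerDl.
by apply: sumr_ge0 => ? _; apply: ler0n.
Qed.

Lemma trunc_prob_maxload_ge_le : series p N.+1 <= 1 ->
  trunc_prob_maxload_ge <= 'C(n, k)%:R * series (fun i => p i ^+ k) N.+1.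
Proof.
move=> s_le1; rewrite /trunc_prob_maxload_ge.
have s_ge0 : 0 <= series p N.+1 by rewrite -sum_ptrunc sumr_ge0 // => b _; exact: ptrunc_ge0.
pose Z g := \sum_(T : {set 'I_n} | #|T| == k) \sum_(b : 'I_N.+1)
  (T \subset [set j | g j == b]%SET)%:R : R.
apply: le_trans (_ : _ <= \sum_(g : {ffun 'I_n -> 'I_N.+1}) \prod_j ptrunc (g j) * Z g) _.
  apply: ler_sum => g _; apply: ler_wpM2l; last exact: maxload_ge_le_subsets.
  by apply: prodr_ge0 => j _; exact: ptrunc_ge0.
have -> : \sum_(g : {ffun 'I_n -> 'I_N.+1}) \prod_j ptrunc (g j) * Z g =
    \sum_(T : {set 'I_n} | #|T| == k) \sum_(b : 'I_N.+1)
      ptrunc b ^+ #|T| * series p N.+1 ^+ (n - #|T|).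
  transitivity (\sum_(g : {ffun 'I_n -> 'I_N.+1}) \sum_(T : {set 'I_n} | #|T| == k)
      \sum_(b : 'I_N.+1) \prod_j ptrunc (g j) * (T \subset [set j | g j == b]%SET)%:R).
    by apply: eq_bigr => g _; rewrite mulr_sumr; apply: eq_bigr => T _; rewrite mulr_sumr.
  rewrite exchange_big; apply: eq_bigr => T _; rewrite exchange_big.
  by apply: eq_bigr => b _; rewrite sum_outcome_mass_subset.
apply: le_trans (_ : _ <= \sum_(T : {set 'I_n} | #|T| == k)
    \sum_(b : 'I_N.+1) ptrunc b ^+ k) _.
  apply: ler_sum => T /eqP <-; apply: ler_sum => b _.
  by rewrite ler_piMr ?exprn_ge0 ?ptrunc_ge0 ?exprn_ile1.
rewrite sumr_const -[X in X <= _]mulr_natl -sum_ptrunc_exprn; apply: ler_wpM2r.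
  by rewrite sumr_ge0 // => b _; rewrite exprn_ge0 ?ptrunc_ge0.
rewrite ler_nat; have := card_draws 'I_n k; rewrite card_ord => <-.
by apply: eq_leq; apply: eq_card => T; rewrite inE.
Qed.

End TruncatedBins.

Lemma fsbig_finE {R : realType} (T : finType) (P : pred T) (f : T -> R) :
  (\sum_(x \in [set x | P x]) (f x)%:E)%R = (\sum_(x : T) f x * (P x)%:R)%:E.
Proof.
rewrite fsbig_mkcond (fsbigE (enum T)) ?enum_uniq //; last by move=> i _; rewrite mem_enum.
rewrite -sumEFin big_enum_cond /=.
apply: eq_big => [i|i _]; first by rewrite in_setT.
by rewrite /patch unfold_in /in_set /= asboolb; case: (P i); rewrite ?mulr1 ?mulr0.
Qed.

Lemma cvg_exprn {R : realType} (f : nat -> R) (a : R) m :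
  f @ \oo --> a -> (fun N => f N ^+ m) @ \oo --> a ^+ m.
Proof. exact: (continuous_cvg _ (@exprn_continuous R m a)). Qed.

Section Limits.
Context {R : realType} (p : nat -> R) (n k : nat).
Hypothesis p_ge0 : forall i, 0 <= p i.
Hypothesis p_sum1 : series p @ \oo --> (1 : R).
Hypothesis k_gt0 : (0 < k)%N.

Let pk i := p i ^+ k.
Let lim_pk := limn (series pk).

Lemma series_p_le1 N : series p N <= 1.
Proof.
have nd : {homo series p : a b / (a <= b)%N >-> a <= b}.
  by apply: nondecreasing_series => i _ _; exact: p_ge0.
by have := nondecreasing_cvgn_le nd (cvgP _ p_sum1) N; rewrite (cvg_lim _ p_sum1).
Qed.

Lemma exprn_p_le i : pk i <= p i.
Proof.
have p_le1 : p i <= 1.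
  apply: le_trans (series_p_le1 i.+1); rewrite /series /= big_nat_recr //= lerDr.
  by apply: sumr_ge0 => j _; exact: p_ge0.
by rewrite /pk -(prednK k_gt0) exprS ler_piMr ?exprn_ile1.
Qed.

Lemma series_pk_nd : {homo series pk : a b / (a <= b)%N >-> a <= b}.
Proof. by apply: nondecreasing_series => i _ _; apply: exprn_ge0. Qed.

Lemma cvg_series_pk : cvgn (series pk).
Proof.
apply: nondecreasing_is_cvgn; first exact: series_pk_nd.
exists 1 => _ [N _ <-]; apply: le_trans (series_p_le1 N).
by apply: ler_sum_nat => i _; exact: exprn_p_le.
Qed.

Lemma series_pk_le_lim N : series pk N <= lim_pk.
Proof. exact: nondecreasing_cvgn_le series_pk_nd cvg_series_pk N. Qed.

Lemma lim_pk_gt0 : infinite_set [set i | 0 < p i] -> 0 < lim_pk.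
Proof.
move=> /infinite_setN0[i /= p_gt0]; apply: lt_le_trans (series_pk_le_lim i.+1).
rewrite /series /= big_nat_recr //= -[X in X < _]add0r.
by apply: ler_ltD; [apply: sumr_ge0 => j _; apply: exprn_ge0 | exact: exprn_gt0].
Qed.

Lemma pnorm_exprn : pnorm p k ^+ k = lim_pk.
Proof.
rewrite /pnorm powR_invnK // (le_trans _ (series_pk_le_lim 0)) //.
by rewrite /series /= big_geq.
Qed.

(* [x `^ k^-1] is differentiable, hence continuous, only away from [0]. *)
Lemma cvg_truncated_pnorm : 0 < lim_pk ->
  trunc_pnorm p k @ \oo --> pnorm p k.
Proof.
move=> lim_gt0.
have cvg_pk : (fun N => series pk N.+1) @ \oo --> lim_pk.
  by rewrite cvg_shiftS; exact: cvg_series_pk.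
have root_cont : {for lim_pk, continuous (fun x : R => x `^ k%:R^-1)}.
  apply: differentiable_continuous; apply/derivable1_diffP; apply: derivable_powR.
  by rewrite in_itv /= andbT.
exact: (continuous_cvg _ root_cont cvg_pk).
Qed.

Lemma cvg_truncated_binom_tail : 0 < lim_pk ->
  (fun N => binom_tail k n (trunc_pnorm p k N) (series p N.+1 - trunc_pnorm p k N))
    @ \oo --> binom_tail_ge n (pnorm p k) k.
Proof.
move=> lim_gt0; have cvg_c := cvg_truncated_pnorm lim_gt0.
apply: cvg_big => [|j _]; first exact: add_continuous.
apply: cvgM; first (apply: cvgM; [exact: cvg_cst | exact: cvg_exprn cvg_c]).
apply: cvg_exprn; apply: cvgB => //; by rewrite cvg_shiftS.
Qed.

Lemma outcome_mass_ge0 (f : {ffun 'I_n -> nat}) : 0 <= outcome_mass p f.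
Proof. by apply: prodr_ge0 => j _; exact: p_ge0. Qed.

Lemma fsbig_maxload_ge_truncated N :
  (\sum_(f \in widen_outcome n N @` [set g | (k <= maxload (widen_outcome n N g))%N])
     (outcome_mass p f)%:E)%R =
  (trunc_prob_maxload_ge p n k N)%:E.
Proof.
rewrite fsbig_image; last by move=> x y _ _; apply: widen_outcome_inj.
rewrite fsbig_finE /trunc_prob_maxload_ge; congr (_%:E); apply: eq_bigr => g _.
by rewrite outcome_mass_widen.
Qed.

Lemma prob_maxload_ge_le : (prob_maxload_ge p n k <= ('C(n, k)%:R * pnorm p k ^+ k)%:E)%E.
Proof.
rewrite pnorm_exprn /prob_maxload_ge /esum; apply: ge_ereal_sup => _ [X [finX XS] <-].
have [s Xs] := (finite_seqP X).1 finX.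
set N := \max_(x <- s) \max_(j : 'I_n) x j.
set P := [set g | (k <= maxload (widen_outcome n N g))%N].
have X_sub : {subset X <= widen_outcome n N @` P}.
  move=> x; rewrite Xs mem_setE => xs.
  have x_le j : (x j <= N)%N.
    apply: leq_trans (leq_bigmax j) _.
    exact: (leq_bigmax_seq (F := fun y : {ffun 'I_n -> nat} => \max_(j : 'I_n) y j) x xs isT).
  have widen_inord : widen_outcome n N [ffun j => inord (x j)] = x.
    by apply/ffunP => j; rewrite !ffunE /= inordK // ltnS x_le.
  rewrite in_setE; exists [ffun j => inord (x j)] => //.
  by rewrite /P /= widen_inord; apply: XS; rewrite Xs.
have fin_img : finite_set (widen_outcome n N @` P) by exact: finite_image.
apply: le_trans (lee_fsum_nneg_subset (f := fun x => (outcome_mass p x)%:E)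
  finX fin_img X_sub _) _.
  by move=> x _; rewrite lee_fin outcome_mass_ge0.
rewrite fsbig_maxload_ge_truncated lee_fin.
apply: le_trans (trunc_prob_maxload_ge_le _ _ _ _ k_gt0 p_ge0 (series_p_le1 _)) _.
by rewrite ler_wpM2l // series_pk_le_lim.
Qed.

Lemma truncated_binom_tail_le N :
  ((binom_tail k n (trunc_pnorm p k N) (series p N.+1 - trunc_pnorm p k N))%:E
     <= prob_maxload_ge p n k)%E.
Proof.
apply: esum_ge; exists (widen_outcome n N @` [set g | (k <= maxload (widen_outcome n N g))%N]).
  by split; [exact: finite_image | move=> _ [g g_ge <-]].
rewrite fsbig_maxload_ge_truncated lee_fin.
exact: (binom_tail_le_trunc_prob _ _ _ _ k_gt0 p_ge0).
Qed.

Lemma binom_tail_le_prob_maxload_ge : infinite_set [set i | 0 < p i] ->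
  ((binom_tail_ge n (pnorm p k) k)%:E <= prob_maxload_ge p n k)%E.
Proof.
move=> p_inf; have cvg_tail := cvg_truncated_binom_tail (lim_pk_gt0 p_inf).
have prob_ge0 : (0 <= prob_maxload_ge p n k)%E.
  by apply: esum_ge0 => x _; rewrite lee_fin outcome_mass_ge0.
move: prob_ge0 (@truncated_binom_tail_le).
case: (prob_maxload_ge p n k) => [r _ tail_le | _ _ | //]; last exact: leey.
rewrite lee_fin -(cvg_lim _ cvg_tail) //; apply: limr_le; first exact: cvgP cvg_tail.
by apply: nearW => N; rewrite -lee_fin tail_le.
Qed.

End Limits.

Theorem mainTheorem11 (R : realType) (p : nat -> R) (n k : nat) :
  (forall i, 0 <= p i) ->
  series p @ \oo --> (1 : R) ->
  infinite_set [set i | 0 < p i] ->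
  (1 <= k)%N ->
  ((binom_tail_ge n (pnorm p k) k)%:E <= prob_maxload_ge p n k)%E /\
  (prob_maxload_ge p n k <= ('C(n, k)%:R * pnorm p k ^+ k)%:E)%E.
Proof.
move=> p_ge0 p_sum1 p_inf k_gt0; split.
  exact: binom_tail_le_prob_maxload_ge.
exact: prob_maxload_ge_le.
Qed.
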